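(* Suppose there exist $\bar\beta_1,\dots,\bar\beta_{m^*}\in\mathcal B^*$ and nonnegative constants $\mu_1,\dots,\mu_{m^*}$ with $\Pi^*\preceq\sum_{k=1}^{m^*}\mu_k\bar\beta_k\bar\beta_k^\top$, and set $\mu^*=\sum_k\mu_k$. If $\max_\ell|\hat\beta_\ell-\beta_\ell|\le\varepsilon$, then $$\operatorname{tr}\big((I-\widehat\Pi)\Pi^*\big)\le4\varepsilon^2\mu^*\quad\text{and}\quad\operatorname{tr}\big((\widehat\Pi-\Pi^* )^2\big)\le8\varepsilon^2\mu^*.$$
   Context: Let $\mathcal S$ be an $m^*$-dimensional linear subspace of $\mathbb R^d$ with orthogonal projector $\Pi^*$, let $\beta_1,\dots,\beta_L\in\mathcal S$, and let $\hat\beta_1,\dots,\hat\beta_L\in\mathbb R^d$ be arbitrary. $|\cdot|$ is the Euclidean norm, $I$ the $d\times d$ identity, $A\preceq B$ means $B-A$ is positive semidefinite. $\mathcal B^*=\{\sum_{\ell=1}^Lc_\ell\beta_\ell:\sum_\ell|c_\ell|\le1\}$. Let $\mathcal A_{m^*}=\{\Pi\in\mathbb R^{d\times d}:\Pi=\Pi^\top,\ 0\preceq\Pi\preceq I,\ \operatorname{tr}\Pi\le m^*\}$ and let $\widehat\Pi$ be a minimizer over $\Pi\in\mathcal A_{m^*}$ of $\max_\ell\hat\beta_\ell^\top(I-\Pi)\hat\beta_\ell$. *)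

From mathcomp Require Import all_boot all_order all_algebra.
From mathcomp Require Import reals.
Set Implicit Arguments. Unset Strict Implicit. Unset Printing Implicit Defensive.
Import Order.TTheory GRing.Theory Num.Theory.
Local Open Scope ring_scope.

Section Defs.
Variable R : realType.

Definition vnorm d (v : 'cV[R]_d) : R := Num.sqrt ((v^T *m v) 0 0).

Definition psd d (M : 'M[R]_d) : Prop := forall x : 'cV[R]_d, 0 <= (x^T *m M *m x) 0 0.

Definition loewner_le d (A B : 'M[R]_d) : Prop := psd (B - A).

Definition orth_proj_dim d (P : 'M[R]_d) (m : nat) : Prop :=
  P^T = P /\ P *m P = P /\ \rank P = m.

Definition in_range_proj d (P : 'M[R]_d) (v : 'cV[R]_d) : Prop := P *m v = v.

Definition in_Bstar d L (beta : 'I_L -> 'cV[R]_d) (v : 'cV[R]_d) : Prop :=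
  exists c : 'I_L -> R, \sum_(l < L) `|c l| <= 1 /\ v = \sum_(l < L) c l *: beta l.

Definition in_A d (m : nat) (P : 'M[R]_d) : Prop :=
  P^T = P /\ loewner_le 0 P /\ loewner_le P 1%:M /\ \tr P <= m%:R.

(* objective: max_l bhat_l^T (I - Pi) bhat_l (seeded with 0; all terms are
   nonnegative on A_m, so this equals the maximum when L >= 1) *)
Definition obj d L (bhat : 'I_L -> 'cV[R]_d) (P : 'M[R]_d) : R :=
  \big[Num.max/0]_(l < L) ((bhat l)^T *m (1%:M - P) *m bhat l) 0 0.

Definition is_minimizer d L (m : nat) (bhat : 'I_L -> 'cV[R]_d) (P : 'M[R]_d) : Prop :=
  in_A m P /\ forall Q, in_A m Q -> obj bhat P <= obj bhat Q.

End Defs.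

From mathcomp Require Import all_boot all_order all_algebra.
From mathcomp Require Import reals.
From mathcomp Require Import ring lra.
Set Implicit Arguments. Unset Strict Implicit. Unset Printing Implicit Defensive.
Import Order.TTheory GRing.Theory Num.Theory.
Local Open Scope ring_scope.

(* Pistar is feasible and kills (1 - Pistar) beta_l, so the optimal value is at
   most eps^2; hence every bhat_l, then every beta_l (at the price of a factor 4)
   and, by convexity of the quadratic form, every element of B^* has
   (1 - Pihat)-energy at most 4 eps^2.  Pairing 1 - Pihat with the positive
   semidefinite matrix sum_k mu_k bbar_k bbar_k^T - Pistar gives the first bound,
   because tr (A B) >= 0 for positive semidefinite A and B (write B = sum v v^T by
   repeated Schur complements).  The second bound then follows from
   tr Pihat^2 <= tr Pihat <= m^* = tr Pistar. *)

Section PsdMatrices.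
Variable R : realType.

Definition bform n (A : 'M[R]_n) (x y : 'cV[R]_n) : R := (x^T *m A *m y) 0 0.

Lemma trmx11 (M : 'M[R]_1) : M^T = M.
Proof. by apply/matrixP => i j; rewrite (ord1 i) (ord1 j) mxE. Qed.

Lemma mulmx11 (M N : 'M[R]_1) : (M *m N) 0 0 = M 0 0 * N 0 0.
Proof. by rewrite mxE big_ord1. Qed.

Lemma bform_sym n (A : 'M[R]_n) x y : A^T = A -> bform A x y = bform A y x.
Proof. by move=> sA; rewrite /bform -[_ *m y]trmx11 !trmx_mul trmxK sA mulmxA. Qed.

Lemma bformDl n (A : 'M[R]_n) x y z : bform A (x + y) z = bform A x z + bform A y z.
Proof. by rewrite /bform [(x + y)^T]linearD /= !mulmxDl [LHS]mxE. Qed.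

Lemma bformDr n (A : 'M[R]_n) x y z : bform A x (y + z) = bform A x y + bform A x z.
Proof. by rewrite /bform mulmxDr [LHS]mxE. Qed.

Lemma bformDD n (A : 'M[R]_n) x y : A^T = A ->
  bform A (x + y) (x + y) = bform A x x + 2 * bform A x y + bform A y y.
Proof.
by move=> sA; rewrite bformDl !bformDr [bform A y x]bform_sym //; ring.
Qed.

Lemma bformNl n (A : 'M[R]_n) x y : bform A (- x) y = - bform A x y.
Proof. by rewrite /bform [(- x)^T]linearN /= !mulNmx mxE. Qed.

Lemma bformNr n (A : 'M[R]_n) x y : bform A x (- y) = - bform A x y.
Proof. by rewrite /bform mulmxN mxE. Qed.

Lemma bformBB n (A : 'M[R]_n) x y : A^T = A ->
  bform A (x - y) (x - y) = bform A x x - 2 * bform A x y + bform A y y.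
Proof. by move=> sA; rewrite bformDD // bformNr bformNl bformNr; ring. Qed.

Lemma bformBm n (A B : 'M[R]_n) x y : bform (A - B) x y = bform A x y - bform B x y.
Proof. by rewrite /bform mulmxBr mulmxBl mxE; congr (_ + _); rewrite mxE. Qed.

Lemma bformZm n c (A : 'M[R]_n) x y : bform (c *: A) x y = c * bform A x y.
Proof. by rewrite /bform -scalemxAr -scalemxAl mxE. Qed.

Lemma bform_ker n (A : 'M[R]_n) x z : A *m z = 0 -> bform A x z = 0.
Proof. by rewrite /bform -mulmxA => ->; rewrite mulmx0 mxE. Qed.

Lemma psd_bform_norm_le n (A : 'M[R]_n) x y : A^T = A -> psd A ->
  `|bform A x y| <= (bform A x x + bform A y y) / 2.
Proof.
move=> sA pA; have h1 : 0 <= bform A (x + y) (x + y) := pA (x + y).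
have h2 : 0 <= bform A (x - y) (x - y) := pA (x - y).
rewrite bformDD // in h1; rewrite bformBB // in h2.
by rewrite ler_norml; apply/andP; split; lra.
Qed.

Lemma psd_bformBB_le n (A : 'M[R]_n) x y : A^T = A -> psd A ->
  bform A (x - y) (x - y) <= 2 * (bform A x x + bform A y y).
Proof.
move=> sA pA; rewrite bformBB //.
have := psd_bform_norm_le x y sA pA; rewrite ler_norml => /andP[h _]; lra.
Qed.

Lemma bform_lincomb n L (A : 'M[R]_n) (c : 'I_L -> R) (v : 'I_L -> 'cV[R]_n) x :
  x = \sum_(l < L) c l *: v l ->
  bform A x x = \sum_(l < L) \sum_(k < L) c l * c k * bform A (v l) (v k).
Proof.
rewrite /bform => ->; have -> : (\sum_(l < L) c l *: v l)^T = \sum_(l < L) c l *: (v l)^T.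
  by apply/matrixP => i j; rewrite !(mxE, summxE); apply: eq_bigr => l _; rewrite !mxE.
rewrite mulmx_suml mulmx_suml summxE; apply: eq_bigr => l _.
rewrite mulmx_sumr summxE; apply: eq_bigr => k _.
by rewrite -!scalemxAl -scalemxAr 2!mxE; ring.
Qed.

Lemma psd_bform_lincomb_le n L (A : 'M[R]_n) (c : 'I_L -> R) (v : 'I_L -> 'cV[R]_n) x K :
  A^T = A -> psd A -> 0 <= K -> (forall l, bform A (v l) (v l) <= K) ->
  \sum_(l < L) `|c l| <= 1 -> x = \sum_(l < L) c l *: v l -> bform A x x <= K.
Proof.
move=> sA pA K0 vK c1 /bform_lincomb ->.
apply: (@le_trans _ _ ((\sum_(l < L) `|c l|) * (\sum_(k < L) `|c k|) * K)).
  rewrite big_distrl big_distrl /=; apply: ler_sum => l _.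
  rewrite big_distrr big_distrl /=; apply: ler_sum => k _.
  apply: (le_trans (ler_norm _)); rewrite !normrM; apply: ler_wpM2l; first exact: mulr_ge0.
  apply: (le_trans (psd_bform_norm_le _ _ sA pA)).
  by have := vK l; have := vK k; lra.
have c0 : 0 <= \sum_(l < L) `|c l| by apply: sumr_ge0.
by rewrite ler_piMl // mulr_ile1.
Qed.

Lemma mulmx_trmx_self_ge0 n (v : 'cV[R]_n) : 0 <= (v^T *m v) 0 0.
Proof. by rewrite mxE; apply: sumr_ge0 => i _; rewrite mxE -expr2 sqr_ge0. Qed.

Lemma vnorm_le_sqr n (v : 'cV[R]_n) e : vnorm v <= e -> (v^T *m v) 0 0 <= e ^+ 2.
Proof.
rewrite /vnorm => ve; rewrite -(sqr_sqrtr (mulmx_trmx_self_ge0 v)).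
by rewrite lerXn2r ?nnegrE ?sqrtr_ge0 // (le_trans (sqrtr_ge0 _) ve).
Qed.

Lemma psd_sym_idem n (P : 'M[R]_n) : P^T = P -> P *m P = P -> psd P.
Proof.
move=> sP PP x; have -> : x^T *m P *m x = (P *m x)^T *m (P *m x).
  by rewrite trmx_mul sP !mulmxA -(mulmxA _ P P) PP.
exact: mulmx_trmx_self_ge0.
Qed.

Lemma trmx1B n (A : 'M[R]_n) : A^T = A -> (1%:M - A)^T = 1%:M - A.
Proof. by move=> sA; rewrite linearB /= trmx1 sA. Qed.

Lemma idem1B n (P : 'M[R]_n) : P *m P = P -> (1%:M - P) *m (1%:M - P) = 1%:M - P.
Proof. by move=> PP; rewrite mulmxBl !mulmxBr !mul1mx mulmx1 PP subrr subr0. Qed.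

Lemma bform1B_le n (Q : 'M[R]_n) w : psd Q -> bform (1%:M - Q) w w <= (w^T *m w) 0 0.
Proof. by move=> pQ; rewrite bformBm /bform mulmx1 gerBl pQ. Qed.

Lemma bform_outer n (b y : 'cV[R]_n) : bform (b *m b^T) y y = ((b^T *m y) 0 0) ^+ 2.
Proof. by rewrite /bform mulmxA -mulmxA -[y^T *m b]trmx11 trmx_mul trmxK mulmx11 expr2. Qed.

Lemma mxtrace_idem n (P : 'M[R]_n) : P *m P = P -> \tr P = (\rank P)%:R.
Proof.
move=> PP; have /row_fullP [B BC] := col_base_full P.
have /row_freeP [D ED] := row_base_free P.
have PCE := mulmx_base P; move: (col_base P) (row_base P) BC ED PCE => C E BC ED PCE.
have CECE : C *m E *m (C *m E) = C *m E by rewrite PCE.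
have EC : E *m C = 1%:M.
  have := congr1 (fun X => B *m X *m D) CECE.
  by rewrite !mulmxA BC mul1mx -!mulmxA ED mulmx1.
have -> : \tr P = \tr (C *m E) by rewrite PCE.
by rewrite mxtrace_mulC EC mxtrace1.
Qed.

Lemma mxtrace_mul_outer n (A : 'M[R]_n) (v : 'cV[R]_n) : \tr (A *m (v *m v^T)) = bform A v v.
Proof. by rewrite mulmxA mxtrace_mulC trace_mx11 mulmxA. Qed.

Lemma affine_ge0_slope0 (s g : R) : (forall t, 0 <= t * s + g) -> s = 0.
Proof. by move=> h; apply/eqP/contraT => s0; have := h (- (g + 1) / s); rewrite divfK //; lra. Qed.

Lemma psd_block_quad n (a : 'M[R]_1) (b : 'cV[R]_n) (C : 'M[R]_n) t y :
  psd (block_mx a b^T b C) -> 0 <= a 0 0 * t ^+ 2 + 2 * t * (b^T *m y) 0 0 + bform C y y.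
Proof.
move=> /(_ (col_mx t%:M y)).
rewrite tr_col_mx mul_row_block mul_row_col !mulmxDl.
rewrite [a]mx11_scalar tr_scalar_mx !mul_scalar_mx !mul_mx_scalar.
rewrite -[y^T *m b]trmx11 trmx_mul trmxK -!scalemxAl.
rewrite /bform; set s := b^T *m y; set g := y^T *m C *m y.
by rewrite !mxE eqxx mulr1n; nra.
Qed.

(* When [a 0 0 = 0] the inverse is the junk value [0]; positivity then forces
   [b = 0], so the decomposition still holds. *)
Lemma psd_schur n (a : 'M[R]_1) (b : 'cV[R]_n) (C : 'M[R]_n) :
  C^T = C -> psd (block_mx a b^T b C) ->
  let S := C - (a 0 0)^-1 *: (b *m b^T) in
  [/\ S^T = S, psd S &
      block_mx a b^T b C = (a 0 0)^-1 *: (col_mx a b *m (col_mx a b)^T) + block_mx 0 0 0 S].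
Proof.
move=> sC pB S; have quad t y := psd_block_quad t y pB.
set al := a 0 0 in S quad *.
split.
- by rewrite /S linearB /= linearZ /= trmx_mul trmxK sC.
- move=> y; change (0 <= bform S y y).
  rewrite bformBm bformZm bform_outer; have := quad (- (b^T *m y) 0 0 / al) y.
  set s := (b^T *m y) 0 0; set g := bform C y y.
  have [->|al0] := eqVneq al 0; first by rewrite invr0; nra.
  suff -> : al * (- s / al) ^+ 2 + 2 * (- s / al) * s + g = g - al^-1 * s ^+ 2 by [].
  by field.
rewrite [a]mx11_scalar -/al.
have [al0|al0] := eqVneq al 0.
  have -> : b = 0.
    apply/matrixP => i j; rewrite (ord1 j) mxE.
    suff /eqP : 2 * b i 0 = 0 by rewrite mulf_eq0 pnatr_eq0 => /eqP.
    apply: (@affine_ge0_slope0 _ (C i i)) => t; have := quad t (delta_mx i 0).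
    rewrite /bform trmx_delta -rowE -colE -colE !mxE al0; lra.
  by rewrite /S al0 invr0 !scale0r add0r subr0 trmx0 raddf0.
rewrite tr_col_mx mul_col_row scale_block_mx add_block_mx !addr0.
rewrite tr_scalar_mx mul_scalar_mx mul_scalar_mx mul_mx_scalar.
by rewrite !scalerA mulVf // !scale1r /S addrC subrK.
Qed.

Lemma psd_gram_block n (a : 'M[R]_1) (u : 'rV[R]_n) (b : 'cV[R]_n) (C : 'M[R]_n) :
  (forall S : 'M[R]_n, S^T = S -> psd S -> exists s : seq 'cV[R]_n, S = \sum_(v <- s) v *m v^T) ->
  let B := block_mx a u b C in B^T = B -> psd B ->
  exists s : seq 'cV[R]_(1 + n), B = \sum_(v <- s) v *m v^T.
Proof.
move=> gram B; rewrite /B tr_block_mx => /eq_block_mx[_ <- _ sC] pB.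
have a_ge0 : 0 <= a 0 0.
  by have := psd_block_quad 1 0 pB; rewrite /bform !mulmx0 !mxE; lra.
have [sS pS ->] := psd_schur sC pB; have [s ->] := gram _ sS pS.
pose E := col_mx (0 : 'M[R]_(1, n)) 1%:M.
exists (Num.sqrt (a 0 0)^-1 *: col_mx a b :: map (mulmx E) s).
rewrite big_cons big_map; congr (_ + _).
  by rewrite linearZ /= -scalemxAl -scalemxAr scalerA -expr2 sqr_sqrtr // invr_ge0.
have -> : forall X : 'M[R]_n, block_mx 0 0 0 X = E *m X *m E^T.
  move=> X; rewrite /E tr_col_mx trmx0 trmx1 mul_col_mx mul_col_row.
  by rewrite !mul0mx mul1mx mulmx0 mulmx1.
rewrite mulmx_sumr mulmx_suml; apply: eq_bigr => v _.
by rewrite trmx_mul !mulmxA.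
Qed.

Lemma psd_gram n (B : 'M[R]_n) : B^T = B -> psd B ->
  exists s : seq 'cV[R]_n, B = \sum_(v <- s) v *m v^T.
Proof.
elim: n B => [|n IHn] B sB pB.
  by exists [::]; rewrite big_nil; apply/matrixP => -[].
by rewrite -[B](@submxK _ 1 n 1 n) in sB pB *; apply: psd_gram_block.
Qed.

Lemma mxtrace_psd_mul_ge0 n (A B : 'M[R]_n) : psd A -> B^T = B -> psd B ->
  0 <= \tr (A *m B).
Proof.
move=> pA sB pB; have [s ->] := psd_gram sB pB.
rewrite mulmx_sumr (raddf_sum (@mxtrace R n)); apply: sumr_ge0 => v _.
rewrite /= mxtrace_mul_outer; apply: pA.
Qed.

Lemma obj_le d L (bhat : 'I_L -> 'cV[R]_d) (P : 'M[R]_d) K : 0 <= K ->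
  (forall l, bform (1%:M - P) (bhat l) (bhat l) <= K) -> obj bhat P <= K.
Proof. by move=> K0 bK; apply: bigmax_le => // l _; apply: bK. Qed.

Lemma bform_le_obj d L (bhat : 'I_L -> 'cV[R]_d) (P : 'M[R]_d) l :
  bform (1%:M - P) (bhat l) (bhat l) <= obj bhat P.
Proof. exact: (le_bigmax _ (fun l => bform (1%:M - P) (bhat l) (bhat l))). Qed.

End PsdMatrices.

Section Proposition5.
Variables (R : realType) (d m L : nat) (Pistar Pihat : 'M[R]_d).
Variables (beta bhat : 'I_L -> 'cV[R]_d) (eps : R).
Hypotheses (Pistar_proj : orth_proj_dim Pistar m)
  (beta_range : forall l, in_range_proj Pistar (beta l))
  (Pihat_min : is_minimizer m bhat Pihat)
  (bhat_close : forall l, vnorm (bhat l - beta l) <= eps).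

Lemma Pistar_in_A : in_A m Pistar.
Proof.
have [sP [PP rkP]] := Pistar_proj.
split=> //; split; first by rewrite /loewner_le subr0; apply: psd_sym_idem.
split; first exact: psd_sym_idem (trmx1B sP) (idem1B PP).
by rewrite mxtrace_idem // rkP.
Qed.

Lemma obj_Pistar_le : obj bhat Pistar <= eps ^+ 2.
Proof.
have [sP [PP _]] := Pistar_proj.
apply: obj_le => [|l]; first exact: sqr_ge0.
have ker : (1%:M - Pistar) *m beta l = 0 by rewrite mulmxBl mul1mx beta_range subrr.
have := vnorm_le_sqr (bhat_close l).
move: (bhat l - beta l) (subrK (beta l) (bhat l)) => w <- wle.
rewrite bformDl !bformDr [bform _ (beta l) w]bform_sym ?trmx1B // !(bform_ker _ ker) !addr0.
by apply: le_trans wle; apply: bform1B_le; apply: psd_sym_idem.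
Qed.

Lemma bform_Pihat_bhat_le l : bform (1%:M - Pihat) (bhat l) (bhat l) <= eps ^+ 2.
Proof.
have [_ minP] := Pihat_min.
exact: le_trans (bform_le_obj _ _ l) (le_trans (minP _ Pistar_in_A) obj_Pistar_le).
Qed.

Lemma bform_Pihat_beta_le l : bform (1%:M - Pihat) (beta l) (beta l) <= 4 * eps ^+ 2.
Proof.
have [[sP [pP [pIP _]]] _] := Pihat_min; rewrite /loewner_le subr0 in pP.
have bhat_le := bform_Pihat_bhat_le l; have := vnorm_le_sqr (bhat_close l).
move: (bhat l - beta l) (subKr (bhat l) (beta l)) => w <- /(le_trans (bform1B_le w pP)) w_le.
by apply: le_trans (psd_bformBB_le _ _ (trmx1B sP) pIP) _; lra.
Qed.

Lemma bform_Pihat_Bstar_le v : in_Bstar beta v -> bform (1%:M - Pihat) v v <= 4 * eps ^+ 2.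
Proof.
have [[sH [_ [pIH _]]] _] := Pihat_min; case=> c [c1 ->].
apply: (psd_bform_lincomb_le (trmx1B sH) pIH _ bform_Pihat_beta_le c1 erefl).
by rewrite mulr_ge0 ?sqr_ge0.
Qed.

Lemma mxtrace_compl_Pihat_Pistar_le N (betabar : 'I_N -> 'cV[R]_d) (mu : 'I_N -> R) :
  (forall k, in_Bstar beta (betabar k)) -> (forall k, 0 <= mu k) ->
  loewner_le Pistar (\sum_(k < N) mu k *: (betabar k *m (betabar k)^T)) ->
  \tr ((1%:M - Pihat) *m Pistar) <= 4 * eps ^+ 2 * \sum_(k < N) mu k.
Proof.
have [sP _] := Pistar_proj; have [[sH [_ [pIH _]]] _] := Pihat_min.
set M := \sum_(k < N) _ => betabar_B mu_ge0 PistarM.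
have sM : M^T = M.
  by rewrite /M raddf_sum; apply: eq_bigr => k _; rewrite /= linearZ /= trmx_mul trmxK.
have trM : \tr ((1%:M - Pihat) *m M) <= 4 * eps ^+ 2 * \sum_(k < N) mu k.
  rewrite /M mulmx_sumr (raddf_sum (@mxtrace R d)) mulr_sumr; apply: ler_sum => k _.
  rewrite /= -scalemxAr mxtraceZ mxtrace_mul_outer mulrC.
  by apply: ler_wpM2r; [exact: mu_ge0 | exact: bform_Pihat_Bstar_le].
have sMP : (M - Pistar)^T = M - Pistar by rewrite linearB /= sM sP.
have := mxtrace_psd_mul_ge0 pIH sMP PistarM.
rewrite mulmxBr (raddfB (@mxtrace R d)) /=; lra.
Qed.

Lemma mxtrace_sqr_diff_le :
  \tr ((Pihat - Pistar) *m (Pihat - Pistar)) <= 2 * \tr ((1%:M - Pihat) *m Pistar).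
Proof.
have [sP [PP rkP]] := Pistar_proj; have [[sH [pH [pIH trH]]] _] := Pihat_min.
rewrite /loewner_le subr0 in pH.
have trP : \tr Pistar = m%:R by rewrite mxtrace_idem // rkP.
have := mxtrace_psd_mul_ge0 pH (trmx1B sH) pIH.
rewrite mulmxBr mulmx1 !mulmxBl !mulmxBr mul1mx PP.
rewrite !(raddfB (@mxtrace R d)) /= (mxtrace_mulC Pistar Pihat); lra.
Qed.

End Proposition5.

Theorem proposition5 (R : realType) (d mstar L : nat)
  (Pistar : 'M[R]_d) (beta bhat : 'I_L -> 'cV[R]_d) (Pihat : 'M[R]_d)
  (betabar : 'I_mstar -> 'cV[R]_d) (mu : 'I_mstar -> R) (eps : R) :
  orth_proj_dim Pistar mstar ->
  (forall l, in_range_proj Pistar (beta l)) ->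
  is_minimizer mstar bhat Pihat ->
  (forall k, in_Bstar beta (betabar k)) ->
  (forall k, 0 <= mu k) ->
  loewner_le Pistar (\sum_(k < mstar) mu k *: (betabar k *m (betabar k)^T)) ->
  (forall l, vnorm (bhat l - beta l) <= eps) ->
  \tr ((1%:M - Pihat) *m Pistar) <= 4 * eps ^+ 2 * (\sum_(k < mstar) mu k) /\
  \tr ((Pihat - Pistar) *m (Pihat - Pistar)) <= 8 * eps ^+ 2 * (\sum_(k < mstar) mu k).
Proof.
move=> Pistar_proj beta_range Pihat_min betabar_B mu_ge0 PistarM bhat_close.
have compl_le := mxtrace_compl_Pihat_Pistar_le Pistar_proj beta_range Pihat_min bhat_close
  betabar_B mu_ge0 PistarM.
split=> //; apply: le_trans (mxtrace_sqr_diff_le Pistar_proj Pihat_min) _; lra.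
Qed.
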